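(* Let $\gamma\in C^0(\mathbb{R}/\ell\mathbb{Z},\mathbb{R}^3)$ be a closed curve of length $\Lambda\in(0,\infty)$ whose image is invariant under $R_1$, $R_2$ and $R_3$ (i.e. $R_i\gamma(\mathbb{R}/\ell\mathbb{Z})=\gamma(\mathbb{R}/\ell\mathbb{Z})$ for $i=1,2,3$). Then $\gamma(\mathbb{R}/\ell\mathbb{Z})$ is contained in the closed ball of radius $\Lambda/4$ centered at the origin.
   Context: $R_1=\mathrm{diag}(1,-1,-1)$, $R_2=\mathrm{diag}(-1,1,-1)$, $R_3=\mathrm{diag}(-1,-1,1)$ are the rotations by angle $\pi$ about the coordinate axes of $\mathbb{R}^3$. *)

From HB Require Import structures.
From mathcomp Require Import all_boot all_order all_algebra.
From mathcomp Require Import all_classical all_reals all_analysis.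
Set Implicit Arguments. Unset Strict Implicit. Unset Printing Implicit Defensive.
Import Order.TTheory GRing.Theory Num.Theory.
Import numFieldNormedType.Exports.
Local Open Scope ring_scope.
Local Open Scope classical_set_scope.

Section Defs.
Variable R : realType.

Definition enorm3 (p : 'cV[R]_3) : R := Num.sqrt (\sum_(i < 3) p i 0 ^+ 2).
Definition edist3 (p q : 'cV[R]_3) : R := enorm3 (p - q).

(* The rotations by pi about the coordinate axes: R_k = diag(...) with +1 at k. *)
Definition Rk (k : 'I_3) : 'M[R]_3 :=
  diag_mx (\row_(i < 3) (if i == k then 1 else -1)).
Definition R1 : 'M[R]_3 := Rk 0.
Definition R2 : 'M[R]_3 := Rk 1.
Definition R3 : 'M[R]_3 := Rk 2%:R.

Definition is_partition (l : R) (n : nat) (t : nat -> R) : Prop :=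
  t 0%N = 0 /\ t n = l /\ (forall k, (k < n)%N -> t k <= t k.+1).

Definition polygon_sum (g : R -> 'cV[R]_3) (n : nat) (t : nat -> R) : R :=
  \sum_(k < n) edist3 (g (t k.+1)) (g (t k)).

(* The length (total variation) of g over one period [0, l] is Lam:
   Lam is the supremum of the lengths of inscribed polygons. *)
Definition curve_length_is (g : R -> 'cV[R]_3) (l Lam : R) : Prop :=
  (forall n t, is_partition l n t -> polygon_sum g n t <= Lam) /\
  (forall e, 0 < e -> exists n t, is_partition l n t /\ Lam - e < polygon_sum g n t).

(* The image of the closed curve R/lZ -> R^3 (g is l-periodic) *)
Definition curve_image (g : R -> 'cV[R]_3) : set 'cV[R]_3 := range g.

Definition invariant_under (M : 'M[R]_3) (S : set 'cV[R]_3) : Prop :=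
  [set M *m p | p in S] = S.

End Defs.

(* A point p of the curve, R1 p and R2 p are three points of the curve,
   hence vertices of an inscribed triangle, whose perimeter is at most the
   length.  With p = (x, y, z) its sides are 2 sqrt (x^2 + y^2),
   2 sqrt (x^2 + z^2) and 2 sqrt (y^2 + z^2), and
   sqrt (a + b) + sqrt (a + c) + sqrt (b + c) >= 2 sqrt (a + b + c) because
   sqrt (a + b) sqrt (a + c) >= a; so the perimeter is at least 4 |p|. *)

From HB Require Import structures.
From mathcomp Require Import all_boot all_order all_algebra.
From mathcomp Require Import all_classical all_reals all_analysis.
From mathcomp Require Import ring lra.
Set Implicit Arguments. Unset Strict Implicit. Unset Printing Implicit Defensive.
Import Order.TTheory GRing.Theory Num.Theory.
Import numFieldNormedType.Exports.
Local Open Scope ring_scope.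
Local Open Scope classical_set_scope.

Lemma periodicz (U V : zmodType) (f : U -> V) (T : U) :
  periodic f T -> forall (k : int) a, f (a + T *~ k) = f a.
Proof.
move=> fT [] n a; first exact: periodicn.
by rewrite NegzE mulrNz -(periodicn fT n.+1 (a - T *~ n.+1)) subrK.
Qed.

Lemma periodic_fundamental_domain (R : archiRealFieldType) (V : zmodType)
    (f : R -> V) (T : R) :
  0 < T -> periodic f T -> forall t, exists2 s, 0 <= s <= T & f s = f t.
Proof.
move=> T_gt0 fT t; exists (t + T *~ (- Num.floor (t / T))); last exact: periodicz.
have /andP[fl_le lt_fl] := floor_itv (t / T).
rewrite ler_pdivlMr // in fl_le; rewrite ltr_pdivrMr // intrD in lt_fl.
by rewrite -mulrzr intrN mulrN; apply/andP; split; nra.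
Qed.

Section Euclidean.
Variable R : realType.
Implicit Types (a b c : R) (p q r : 'cV[R]_3).

Lemma enorm3E p :
  enorm3 p = Num.sqrt (p 0 0 ^+ 2 + p 1 0 ^+ 2 + p 2%:R 0 ^+ 2).
Proof.
rewrite /enorm3 !big_ord_recr big_ord0 /= add0r.
by congr (Num.sqrt (p _ 0 ^+ 2 + p _ 0 ^+ 2 + p _ 0 ^+ 2)); apply/val_inj.
Qed.

Lemma enorm3_ge0 p : 0 <= enorm3 p.
Proof. exact: sqrtr_ge0. Qed.

Lemma cauchy_schwarz3 (a0 a1 a2 b0 b1 b2 : R) :
  a0 * b0 + a1 * b1 + a2 * b2 <=
  Num.sqrt (a0 ^+ 2 + a1 ^+ 2 + a2 ^+ 2) * Num.sqrt (b0 ^+ 2 + b1 ^+ 2 + b2 ^+ 2).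
Proof.
rewrite -sqrtrM ?addr_ge0 ?sqr_ge0 //.
apply: le_trans (ler_norm _) _; rewrite -sqrtr_sqr ler_wsqrtr // -subr_ge0.
(* Lagrange's identity *)
rewrite (_ : _ - _ = (a0 * b1 - a1 * b0) ^+ 2 + (a0 * b2 - a2 * b0) ^+ 2
                     + (a1 * b2 - a2 * b1) ^+ 2); last by ring.
by rewrite !addr_ge0 ?sqr_ge0.
Qed.

Lemma enorm3D_le p q : enorm3 (p + q) <= enorm3 p + enorm3 q.
Proof.
rewrite -ler_sqr ?nnegrE ?addr_ge0 ?enorm3_ge0 // sqrrD.
have := cauchy_schwarz3 (p 0 0) (p 1 0) (p 2%:R 0) (q 0 0) (q 1 0) (q 2%:R 0).
rewrite !enorm3E !sqr_sqrtr ?addr_ge0 ?sqr_ge0 // !mxE; lra.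
Qed.

Lemma enorm3Z a p : enorm3 (a *: p) = `|a| * enorm3 p.
Proof.
rewrite !enorm3E !mxE !exprMn -!mulrDr sqrtrM ?sqr_ge0 //.
by rewrite sqrtr_sqr.
Qed.

Lemma enorm3N p : enorm3 (- p) = enorm3 p.
Proof. by rewrite -scaleN1r enorm3Z normrN normr1 mul1r. Qed.

Lemma edist3C p q : edist3 p q = edist3 q p.
Proof. by rewrite /edist3 -enorm3N opprB. Qed.

Lemma edist3_triangle p q r : edist3 p r <= edist3 p q + edist3 q r.
Proof.
rewrite /edist3 (_ : p - r = (p - q) + (q - r)); last by rewrite addrA subrK.
exact: enorm3D_le.
Qed.

Definition perimeter p q r := edist3 p q + edist3 q r + edist3 r p.

Lemma perimeter_rot p q r : perimeter p q r = perimeter q r p.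
Proof. by rewrite /perimeter [RHS]addrC addrA. Qed.

Lemma perimeter_swap p q r : perimeter p q r = perimeter p r q.
Proof. by rewrite /perimeter (edist3C p q) (edist3C q r) (edist3C r p); lra. Qed.

Lemma sqrtD_mul_ge a b c :
  0 <= a -> 0 <= b -> 0 <= c -> a <= Num.sqrt (a + b) * Num.sqrt (a + c).
Proof.
move=> a0 b0 c0; rewrite -sqrtrM ?addr_ge0 //.
rewrite -[a in a <= _]ger0_norm // -sqrtr_sqr ler_wsqrtr //; nra.
Qed.

Lemma sqrt_pair_sums_ge a b c : 0 <= a -> 0 <= b -> 0 <= c ->
  2 * Num.sqrt (a + b + c) <=
  Num.sqrt (a + b) + Num.sqrt (a + c) + Num.sqrt (b + c).
Proof.
move=> a0 b0 c0.
rewrite -ler_sqr ?nnegrE ?mulr_ge0 ?addr_ge0 ?sqrtr_ge0 // exprMn.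
have := sqrtD_mul_ge a0 b0 c0; have := sqrtD_mul_ge b0 a0 c0.
have := sqrtD_mul_ge c0 a0 b0.
rewrite (addrC b a) (addrC c a) (addrC c b).
set u := Num.sqrt (a + b); set v := Num.sqrt (a + c); set w := Num.sqrt (b + c).
have -> : (u + v + w) ^+ 2 = u ^+ 2 + v ^+ 2 + w ^+ 2 + 2 * (u * v + u * w + v * w).
  by ring.
rewrite !sqr_sqrtr ?addr_ge0 //; lra.
Qed.

Lemma Rk_mulE k p i : (Rk R k *m p) i 0 = (if i == k then 1 else -1) * p i 0.
Proof. by rewrite /Rk mul_diag_mx !mxE. Qed.

Lemma enorm3_le_perimeter p : 4 * enorm3 p <= perimeter (R1 R *m p) (R2 R *m p) p.
Proof.
have -> : 4 * enorm3 p = 2 * enorm3 (2 *: p).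
  by rewrite enorm3Z ger0_norm // mulrA -natrM.
rewrite /perimeter /edist3 /R1 /R2 !enorm3E !(Rk_mulE, mxE) /=.
set x := p 0 0; set y := p 1 0; set z := p 2%:R 0.
rewrite [X in _ <= X](_ : _ = Num.sqrt ((2 * x) ^+ 2 + (2 * y) ^+ 2)
    + Num.sqrt ((2 * x) ^+ 2 + (2 * z) ^+ 2) + Num.sqrt ((2 * y) ^+ 2 + (2 * z) ^+ 2)).
  by apply: sqrt_pair_sums_ge; exact: sqr_ge0.
by congr (Num.sqrt _ + Num.sqrt _ + Num.sqrt _); ring.
Qed.

End Euclidean.

Section InscribedTriangle.
Variables (R : realType) (l Lam : R) (g : R -> 'cV[R]_3).
Hypothesis g_length : curve_length_is g l Lam.
Hypothesis g_periodic : periodic g l.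

Lemma perimeter_le_length_sorted s t u : 0 <= s -> s <= t -> t <= u -> u <= l ->
  perimeter (g s) (g t) (g u) <= Lam.
Proof.
move=> s_ge0 le_st le_tu u_le.
have part : is_partition l 4 (nth l [:: 0; s; t; u]).
  by do 2 split=> //; case=> [|[|[|[|k]]]].
have := g_length.1 _ _ part; rewrite /polygon_sum !big_ord_recr big_ord0 /= add0r.
have gl : g l = g 0 by rewrite -[l]add0r g_periodic.
(* close the polygon g 0, g s, g t, g u, g l = g 0 by the triangle inequality at g 0 *)
have := edist3_triangle (g u) (g 0) (g s).
rewrite gl /perimeter (edist3C (g 0) (g u)) (edist3C (g t) (g s))
  (edist3C (g u) (g t)) (edist3C (g 0) (g s)); lra.
Qed.

Lemma perimeter_le_length s t u : 0 <= s <= l -> 0 <= t <= l -> 0 <= u <= l ->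
  perimeter (g s) (g t) (g u) <= Lam.
Proof.
wlog le_st : s t / s <= t.
  move=> H hs ht hu; have [le_st|/ltW le_ts] := leP s t; first exact: H.
  by rewrite perimeter_rot perimeter_swap; exact: H.
move=> /andP[s_ge0 s_le] /andP[t_ge0 t_le] /andP[u_ge0 u_le].
have [le_tu|lt_ut] := leP t u; first exact: perimeter_le_length_sorted.
have [le_su|lt_us] := leP s u.
  by rewrite perimeter_swap; apply: perimeter_le_length_sorted => //; exact: ltW.
by rewrite -perimeter_rot; apply: perimeter_le_length_sorted => //; exact: ltW.
Qed.

End InscribedTriangle.

Theorem lemma3p13 (R : realType) (l Lam : R) (g : R -> 'cV[R]_3) :
  0 < l ->
  continuous g ->
  (forall t, g (t + l) = g t) ->
  0 < Lam ->
  curve_length_is g l Lam ->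
  invariant_under (R1 R) (curve_image g) ->
  invariant_under (R2 R) (curve_image g) ->
  invariant_under (R3 R) (curve_image g) ->
  forall p, curve_image g p -> enorm3 p <= Lam / 4.
Proof.
move=> l_gt0 _ g_per _ g_len R1_inv R2_inv _ _ [t _ <-].
have on_curve M : invariant_under M (curve_image g) ->
    exists2 s, 0 <= s <= l & g s = M *m g t.
  move=> M_inv; have : curve_image g (M *m g t).
    by rewrite -M_inv; exists (g t) => //; exists t.
  by case=> s' _ <-; exact: periodic_fundamental_domain.
rewrite ler_pdivlMr // mulrC; apply: le_trans (enorm3_le_perimeter _) _.
have [s1 s1_itv <-] := on_curve _ R1_inv.
have [s2 s2_itv <-] := on_curve _ R2_inv.
have [s0 s0_itv <-] := periodic_fundamental_domain l_gt0 g_per t.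
exact (perimeter_le_length g_len g_per s1_itv s2_itv s0_itv).
Qed.
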